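(* Let $n\ge4$, let $C=\mathrm{circ}(1,0,\ldots,0,-1)$ of order $n-1$, let $X=(CC^T+I_{n-1})^{-1}(J_{n-1}-nI_{n-1})$ and $Y=-C^TX$. Then $Y=\mathrm{circ}(d_0,d_1,\ldots,d_{n-2})$ where \[d_0=\frac{2n}{\sqrt{5}}\left[\frac{(3+\sqrt{5})^{n-2}-2^{n-2}}{2^{n-1}-(3+\sqrt{5})^{n-1}} -\frac{(3-\sqrt{5})^{n-2}-2^{n-2}}{2^{n-1}-(3-\sqrt{5})^{n-1}}\right]\] and for $j=1,2,\ldots,n-2$, \[d_j=-\frac{n2^{n-j}}{5+\sqrt{5}}\left[\frac{(3+\sqrt{5})^{j}}{2^{n-1}-(3+\sqrt{5})^{n-1}} +\frac{2(3-\sqrt{5})^{j-1}}{2^{n-1}-(3-\sqrt{5})^{n-1}}\right].\]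
   Context: For $c_0,\dots,c_{k-1}$, $\mathrm{circ}(c_0,\ldots,c_{k-1})$ denotes the $k\times k$ circulant matrix whose $(i,j)$-entry is $c_{(j-i)\bmod k}$. $J_{n-1}$ is the $(n-1)\times(n-1)$ all-ones matrix and $I_{n-1}$ the identity. Note $CC^T+I_{n-1}=\mathrm{circ}(3,-1,0,\ldots,0,-1)$ is invertible. ($X,Y$ are blocks of the Moore–Penrose inverse of the oriented incidence matrix of the wheel graph $W_n$.) *)

From HB Require Import structures.
From mathcomp Require Import all_boot all_order all_algebra.
Set Implicit Arguments. Unset Strict Implicit. Unset Printing Implicit Defensive.
Import Order.TTheory GRing.Theory Num.Theory.
Local Open Scope ring_scope.

Definition circ (R : nmodType) (k : nat) (c : nat -> R) : 'M[R]_k :=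
  \matrix_(i < k, j < k) c (((j + k) - i) %% k)%N.

Definition circC_coef (R : nzRingType) (k : nat) (j : nat) : R :=
  if j == 0%N then 1 else if j == k.-1 then -1 else 0.

From mathcomp Require Import all_boot all_order all_algebra all_fingroup.
From mathcomp Require Import ring lra zify.
Set Implicit Arguments. Unset Strict Implicit. Unset Printing Implicit Defensive.
Import Order.TTheory GRing.Theory Num.Theory.
Local Open Scope ring_scope.

(* Write C = I - P with P the cyclic shift. Then A = C C^T + I = 3I - P - P^T is invertible
   (v A v^T = |v C|^2 + |v|^2), commutes with C^T because C is normal, and C^T J = 0; hence
   Y = n A^-1 C^T, and Y = circ(d) amounts to A circ(d) = n C^T, i.e. to the cyclic recurrence
   3 d_t - d_(t+1) - d_(t-1) = n ([t = 0] - [t = 1]).  With x = (3 + sqrt 5)/2, a root of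
   x^2 = 3x - 1, every g_t = a x^t + b x^-t solves the homogeneous recurrence, and a, b are
   chosen so that g jumps by n over one period: g_k - g_0 = g_(k+1) - g_1 = n for k = n - 1.
   Then d_t = g_t for 0 < t < k and d_0 = g_k solve the cyclic recurrence, and the closed
   form of the theorem is this solution written out in terms of sqrt 5. *)

Definition cyc_succ (k t : nat) : nat := if t == k.-1 then 0 else t.+1.
Definition cyc_pred (k t : nat) : nat := if t == 0 then k.-1 else t.-1.

Lemma mulmx_tr_add1_unit (R : realFieldType) n (M : 'M[R]_n) :
  M *m M^T + 1%:M \in unitmx.
Proof.
rewrite -row_free_unit; apply: inj_row_free => v.
rewrite mulmxDr mulmx1 mulmxA => vA0.
have sqr_norm (w : 'rV[R]_n) : (w *m w^T) 0 0 = \sum_l w 0 l ^+ 2.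
  by rewrite mxE; apply: eq_bigr => l _; rewrite mxE expr2.
have /(congr1 (fun N : 'M_1 => N 0 0)) : (v *m M) *m (v *m M)^T + v *m v^T = 0.
  by rewrite trmx_mul !mulmxA -mulmxDl vA0 mul0mx.
rewrite mxE !sqr_norm mxE => sum0.
have sum_ge0 (w : 'rV[R]_n) : 0 <= \sum_l w 0 l ^+ 2.
  by apply: sumr_ge0 => l _; exact: sqr_ge0.
have /psumr_eq0P v0 : \sum_l v 0 l ^+ 2 = 0.
  by have := sum_ge0 (v *m M); have := sum_ge0 v; lra.
apply/matrixP => i l; rewrite ord1 mxE; apply/eqP.
by rewrite -sqrf_eq0 v0 // => ? _; exact: sqr_ge0.
Qed.

Lemma invmx_comm (R : comUnitRingType) n (A B : 'M[R]_n) :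
  A \in unitmx -> A *m B = B *m A -> invmx A *m B = B *m invmx A.
Proof.
move=> A_unit AB; apply: (canLR (mulKmx A_unit)).
by rewrite mulmxA AB -mulmxA mulmxV ?mulmx1.
Qed.

Lemma opp_tr_mul_invmx_const (R : comUnitRingType) n (M D : 'M[R]_n) (c : R) :
  M *m M^T + 1%:M \in unitmx -> M *m M^T = M^T *m M -> M^T *m (const_mx 1 : 'M_n) = 0 ->
  (M *m M^T + 1%:M) *m D = c *: M^T ->
  - (M^T *m (invmx (M *m M^T + 1%:M) *m (const_mx 1 - c%:M))) = D.
Proof.
set A := _ + _ => A_unit normal MtJ AD.
have AMt : A *m M^T = M^T *m A.
  by rewrite mulmxDl mulmxDr mul1mx mulmx1 {1}normal -mulmxA.
rewrite mulmxA -(invmx_comm A_unit AMt) -mulmxA mulmxBr MtJ mul_mx_scalar.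
by rewrite sub0r mulmxN opprK -AD mulKmx.
Qed.

Section Circulant.
Variable k : nat.
Local Notation K := k.+2.

Lemma val_ord_sub (i j : 'I_K) : val (j - i) = (((j + K) - i) %% K)%N.
Proof. by rewrite /= modnDmr addnBA // ltnW. Qed.

Lemma circE (R : nmodType) (c : nat -> R) : circ K c = \matrix_(i, j) c (val (j - i)).
Proof. by apply/matrixP => i j; rewrite !mxE val_ord_sub. Qed.

Lemma val_ord_add1 (t : 'I_K) : val (t + 1) = cyc_succ K t.
Proof.
rewrite (add_Zp_1 (p := K)) /= /cyc_succ; case: eqP => [->|t_neq]; first by rewrite modnn.
by rewrite modn_small //; have := ltn_ord t; rewrite /Zp_trunc /=; lia.
Qed.

Lemma val_ord_sub1 (t : 'I_K) : val (t - 1) = cyc_pred K t.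
Proof.
rewrite (sub_Zp_1 (p := K)) /= /cyc_pred; case: eqP => [->|t_neq]; first by rewrite modn_small.
have t_lt := ltn_ord t; rewrite /Zp_trunc /=.
have -> : (t + K).-1 = (t.-1 + K)%N by lia.
by rewrite modnDr modn_small //; lia.
Qed.

Definition shift : 'S_K := perm (@addIr _ (-1)).

Lemma shiftE i : shift i = i - 1.
Proof. by rewrite permE. Qed.

Lemma shiftVE i : (shift^-1)%g i = i + 1.
Proof. by apply: (perm_inj (s := shift)); rewrite permKV shiftE addrK. Qed.

Lemma circC_coef_shift (R : nzRingType) :
  circ K (circC_coef R K) = 1%:M - perm_mx shift.
Proof.
apply/matrixP => i j; rewrite circE !mxE /circC_coef shiftE /=.
have -> : (val (j - i) == 0%N) = (i == j).
  by rewrite -[0%N]/(val (0 : 'I_K)) val_eqE subr_eq0 eq_sym.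
have -> : (val (j - i) == k.+1) = (i - 1 == j).
  have val_N1 : val (-1 : 'I_K) = k.+1 by rewrite -sub0r val_ord_sub1.
  transitivity (j - i == -1); first by rewrite -val_eqE val_N1.
  by rewrite subr_eq [-1 + i]addrC eq_sym.
case: eqP => [<-|_].
  by rewrite (_ : (i - 1 == i) = false) ?subr0 // -subr_eq0 addrAC subrr add0r oppr_eq0.
by case: (i - 1 =P j); rewrite /= ?mulr0n ?mulr1n ?subr0 ?sub0r.
Qed.

Section WheelMatrices.
Variable R : comNzRingType.
Local Notation C := (circ K (circC_coef R K)).
Local Notation P := (perm_mx shift : 'M[R]_K).
Local Notation Q := (perm_mx shift^-1 : 'M[R]_K).

Lemma circC_tr : C^T = 1%:M - Q.
Proof. by rewrite circC_coef_shift linearB /= trmx1 tr_perm_mx. Qed.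

Lemma circC_normal : C *m C^T = C^T *m C.
Proof.
rewrite circC_tr circC_coef_shift !mulmxBl !mulmxBr !mul1mx !mulmx1.
by rewrite -!perm_mxM mulgV mulVg perm_mx1 !opprB addrC.
Qed.

Lemma circC_tr_const : C^T *m (const_mx 1 : 'M[R]_K) = 0.
Proof. by rewrite circC_tr mulmxBl mul1mx -row_permE row_perm_const subrr. Qed.

Lemma circC_mul_tr_add1 : C *m C^T + 1%:M = 3%:M - P - Q.
Proof.
rewrite circC_tr circC_coef_shift mulmxBl mul1mx mulmxBr mulmx1 -perm_mxM mulgV perm_mx1.
by apply/matrixP => i j; rewrite !mxE; ring.
Qed.

Lemma circC_mul_tr_add1_circ (d : nat -> R) (c : R) :
  (forall t, (t < K)%N ->
     3 * d t - d (cyc_succ K t) - d (cyc_pred K t) = c * ((t == 0)%:R - (t == 1)%:R)) ->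
  (C *m C^T + 1%:M) *m circ K d = c *: C^T.
Proof.
move=> d_rec.
rewrite circC_mul_tr_add1 !mulmxBl mul_scalar_mx -!row_permE circC_tr circE.
apply/matrixP => i j; rewrite !mxE shiftE shiftVE.
have -> : j - (i - 1) = (j - i) + 1 by ring.
have -> : j - (i + 1) = (j - i) - 1 by ring.
have -> : (i == j) = (j - i == 0) by rewrite subr_eq0 eq_sym.
have -> : (i + 1 == j) = (j - i == 1).
  by rewrite eq_sym subr_eq addrC.
have val1 : val (1 : 'I_K) = 1%N by rewrite /= modn_small.
move: (j - i) => t; rewrite val_ord_add1 val_ord_sub1 -!val_eqE val1.
exact: d_rec (ltn_ord t).
Qed.
End WheelMatrices.
End Circulant.

Section CyclicRecurrence.
Variables (R : comPzRingType) (m : nat) (nn : R) (g d : nat -> R).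
Local Notation k := m.+3.
Hypothesis g_rec : forall j, 3 * g j.+1 - g j.+2 - g j = 0.
Hypothesis g_jump0 : g k - g 0 = nn.
Hypothesis g_jump1 : g k.+1 - g 1 = nn.
Hypothesis d0 : d 0 = g k.
Hypothesis dE : forall j, (0 < j < k)%N -> d j = g j.

Lemma cyclic_rec_of_jumps q : (q < k)%N ->
  3 * d q - d (cyc_succ k q) - d (cyc_pred k q) = nn * ((q == 0)%:R - (q == 1)%:R).
Proof.
rewrite /cyc_succ /cyc_pred; case: q => [|[|q]] q_lt /=.
- rewrite d0 !dE ?ltnSn // -g_jump1 -[RHS]addr0 -(g_rec m.+2); ring.
- rewrite d0 !dE // -g_jump0 -[RHS]addr0 -(g_rec 0); ring.
- rewrite subrr mulr0; case: eqP => [[->]|/eqP q_neq].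
    by rewrite d0 !dE ?g_rec //; lia.
  by rewrite !dE ?g_rec //; lia.
Qed.
End CyclicRecurrence.

Section GeometricSolution.
Variables (F : fieldType) (x nn : F) (k : nat).
Hypothesis x_root : x ^+ 2 = 3 * x - 1.
Hypothesis x1_neq0 : 1 + x != 0.
Hypothesis xk_neq1 : x ^+ k != 1.

Definition geo_sol j :=
  nn / ((1 + x) * (x ^+ k - 1)) * x ^+ j + nn * x / ((1 + x) * (x ^- k - 1)) * x ^- j.

Let x_neq0 : x != 0.
Proof.
by apply: contra_eq_neq x_root => ->; rewrite expr0n mulr0 sub0r eq_sym oppr_eq0 oner_neq0.
Qed.

Let xk_neq0 : x ^+ k != 0.
Proof. by rewrite expf_neq0. Qed.

Let xk_sub1_neq0 : x ^+ k - 1 != 0.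
Proof. by rewrite subr_eq0. Qed.

Let sub1_xk_neq0 : 1 - x ^+ k != 0.
Proof. by rewrite subr_eq0 eq_sym. Qed.

Lemma geo_sol_rec j : 3 * geo_sol j.+1 - geo_sol j.+2 - geo_sol j = 0.
Proof.
have xj : x ^+ j != 0 by rewrite expf_neq0.
rewrite /geo_sol; move: (nn / _) (nn * x / _) => a b.
by rewrite !exprS; field: x_root; rewrite x_neq0 xj.
Qed.

Lemma geo_sol_jump0 : geo_sol k - geo_sol 0 = nn.
Proof.
rewrite /geo_sol expr0 invr1 mulr1; field.
by rewrite mulN1r sub1_xk_neq0 xk_neq0 x1_neq0 xk_sub1_neq0.
Qed.

Lemma geo_sol_jump1 : geo_sol k.+1 - geo_sol 1 = nn.
Proof.
rewrite /geo_sol exprS expr1; field.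
by rewrite mulN1r sub1_xk_neq0 xk_neq0 x1_neq0 xk_sub1_neq0 x_neq0.
Qed.
End GeometricSolution.

Definition wheel_coef (R : rcfType) (n : nat) : nat -> R :=
  let s := Num.sqrt (5 : R) in
  fun j =>
    if j == 0%N then
      (2 * n%:R) / s *
        (((3 + s) ^+ (n - 2) - 2 ^+ (n - 2)) / (2 ^+ (n - 1) - (3 + s) ^+ (n - 1))
         - ((3 - s) ^+ (n - 2) - 2 ^+ (n - 2)) / (2 ^+ (n - 1) - (3 - s) ^+ (n - 1)))
    else
      - (n%:R * 2 ^+ (n - j)) / (5 + s) *
        ((3 + s) ^+ j / (2 ^+ (n - 1) - (3 + s) ^+ (n - 1))
         + 2 * (3 - s) ^+ j.-1 / (2 ^+ (n - 1) - (3 - s) ^+ (n - 1))).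

Lemma subX_mulX (R : comPzRingType) (a b : R) k :
  a ^+ k - (a * b) ^+ k = a ^+ k * (1 - b ^+ k).
Proof. by rewrite exprMn mulrBr mulr1. Qed.

Definition phi2 (R : rcfType) : R := (3 + Num.sqrt 5) / 2.

Section GoldenRatioSquared.
Variable R : rcfType.
Local Notation s := (Num.sqrt (5 : R)).
Local Notation x := (phi2 R).

Lemma sqrt5_sqr : s ^+ 2 = 5.
Proof. by rewrite sqr_sqrtr // ler0n. Qed.

Lemma sqrt5_gt2 : 2 < s.
Proof. have := sqrt5_sqr; have := sqrtr_ge0 (5 : R); nra. Qed.

Let three_add_sqrt5_neq0 : 3 + s != 0.
Proof. by apply: lt0r_neq0; have := sqrt5_gt2; lra. Qed.

Lemma phi2_root : x ^+ 2 = 3 * x - 1.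
Proof. by have s2 := sqrt5_sqr; rewrite /phi2; field: s2. Qed.

Lemma phi2_gt1 : 1 < x.
Proof. by have := sqrt5_gt2; rewrite /phi2; lra. Qed.

Lemma phi2_neq0 : x != 0.
Proof. by apply: lt0r_neq0; have := phi2_gt1; lra. Qed.

Lemma phi2_add1_neq0 : 1 + x != 0.
Proof. by apply: lt0r_neq0; have := phi2_gt1; lra. Qed.

Lemma phi2_expS_neq1 k : x ^+ k.+1 != 1.
Proof. by rewrite eq_sym lt_eqF // exprn_egt1 // phi2_gt1. Qed.

Lemma three_add_sqrt5 : 3 + s = 2 * x.
Proof. by rewrite /phi2; field. Qed.

Lemma three_sub_sqrt5 : 3 - s = 2 * x^-1.
Proof. by have s2 := sqrt5_sqr; rewrite /phi2; field: s2; rewrite three_add_sqrt5_neq0. Qed.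

Lemma five_add_sqrt5 : 5 + s = 2 * (1 + x).
Proof. by rewrite /phi2; field. Qed.

Lemma sqrt5_phi2 : s = x - x^-1.
Proof. by have s2 := sqrt5_sqr; rewrite /phi2; field: s2; rewrite three_add_sqrt5_neq0. Qed.

Lemma wheel_coef_gt0 m j : (0 < j <= m.+2)%N ->
  wheel_coef R m.+2 j = geo_sol x m.+2%:R m.+1 j.
Proof.
case: j => [//|i] /= i_lt.
rewrite /wheel_coef /= (exprB (x := 2)) ?unitfE ?pnatr_eq0 // subn1 /=.
rewrite three_add_sqrt5 three_sub_sqrt5 five_add_sqrt5 /geo_sol.
rewrite !subX_mulX !(exprMn _ 2) !exprVn (exprS 2 m.+1) (exprS 2 i) (exprS x i).
move: phi2_neq0 phi2_add1_neq0 (phi2_expS_neq1 m); move: x => y y0 y1 yk.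
field; rewrite mulN1r !subr_eq0 (eq_sym 1) yk y1 y0.
by rewrite !expf_eq0 (negbTE y0) pnatr_eq0 !andbF.
Qed.

Lemma wheel_coef0 m : wheel_coef R m.+2 0 = geo_sol x m.+2%:R m.+1 m.+1.
Proof.
rewrite /wheel_coef /= !subSS !subn0 three_add_sqrt5 three_sub_sqrt5 sqrt5_phi2 /geo_sol.
rewrite !subX_mulX !(exprMn _ 2) !exprVn (exprS 2 m) (exprS x m).
move: phi2_neq0 phi2_add1_neq0 (phi2_expS_neq1 1) (phi2_expS_neq1 m).
move: x => y y0 y1 y2 yk.
field; rewrite -exprS -expr2 mulN1r !subr_eq0 (eq_sym 1) yk y2 y1 y0.
by rewrite !expf_eq0 (negbTE y0) pnatr_eq0 !andbF.
Qed.
End GoldenRatioSquared.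

Theorem mainTheorem9 (R : rcfType) (n : nat) (hn : (4 <= n)%N) :
  let C : 'M[R]_(n.-1) := circ n.-1 (circC_coef R n.-1) in
  let X : 'M[R]_(n.-1) :=
    invmx (C *m C^T + 1%:M) *m (const_mx 1 - (n%:R)%:M) in
  let Y : 'M[R]_(n.-1) := - (C^T *m X) in
  let s := Num.sqrt (5 : R) in
  let d : nat -> R := fun j =>
    if j == 0%N then
      (2 * n%:R) / s *
        (((3 + s) ^+ (n - 2) - 2 ^+ (n - 2)) / (2 ^+ (n - 1) - (3 + s) ^+ (n - 1))
         - ((3 - s) ^+ (n - 2) - 2 ^+ (n - 2)) / (2 ^+ (n - 1) - (3 - s) ^+ (n - 1)))
    else
      - (n%:R * 2 ^+ (n - j)) / (5 + s) *
        ((3 + s) ^+ j / (2 ^+ (n - 1) - (3 + s) ^+ (n - 1))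
         + 2 * (3 - s) ^+ j.-1 / (2 ^+ (n - 1) - (3 - s) ^+ (n - 1))) in
  Y = circ n.-1 d.
Proof.
case: n hn => [|[|[|[|m]]]] // _ C X Y s d.
rewrite /Y /X /C (_ : d = wheel_coef R m.+4) //.
apply: opp_tr_mul_invmx_const.
- exact: mulmx_tr_add1_unit.
- exact: circC_normal.
- exact: circC_tr_const.
apply: circC_mul_tr_add1_circ => t t_lt.
apply: (cyclic_rec_of_jumps (g := geo_sol (phi2 R) m.+4%:R m.+3)) => //.
- exact: geo_sol_rec (phi2_root R).
- exact: geo_sol_jump0 (phi2_root R) (phi2_add1_neq0 R) (phi2_expS_neq1 R m.+2).
- exact: geo_sol_jump1 (phi2_root R) (phi2_add1_neq0 R) (phi2_expS_neq1 R m.+2).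
- exact: wheel_coef0.
- by move=> j j_bnd; rewrite wheel_coef_gt0 //; lia.
Qed.
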